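(* Let $\mathcal{H}$ be a complex Hilbert space and let $A\in\mathcal{B}(\mathcal{H})$ be a positive operator with $\dim R(A)\ge 2$. Let $T\in\mathcal{B}_A(\mathcal{H})$ and let $q\in\mathbb{C}$ with $0<|q|\le 1$. Then \[ \frac{|q|^2}{4}\,\big\|T^{\sharp_A}T+TT^{\sharp_A}\big\|_A\;\le\; w_{q,A}^2(T)\;\le\;\frac{2-|q|^2+4|q|\sqrt{1-|q|^2}}{2}\,\big\|TT^{\sharp_A}+T^{\sharp_A}T\big\|_A . \]
   Context: $A$ induces the semi-inner product $\langle x,y\rangle_A=\langle Ax,y\rangle$ and seminorm $\|x\|_A=\sqrt{\langle x,x\rangle_A}$. For an operator $S$, $\|S\|_A=\sup\{\|Sx\|_A/\|x\|_A : x\in\overline{R(A)},\,x\neq 0\}$. An operator $W$ is an $A$-adjoint of $T$ if $\langle Tx,y\rangle_A=\langle x,Wy\rangle_A$ for all $x,y$; $\mathcal{B}_A(\mathcal{H})$ is the set of operators admitting an $A$-adjoint, and for $T\in\mathcal{B}_A(\mathcal{H})$, $T^{\sharp_A}$ denotes the unique solution $X$ of $AX=T^*A$ with $R(X)\subseteq \overline{R(A)}$ (the reduced solution). For $q$ with $|q|\le1$, the $A$-$q$-numerical radius is $w_{q,A}(T)=\sup\{|\langle Tx,y\rangle_A| : \|x\|_A=\|y\|_A=1,\ \langle x,y\rangle_A=q\}$. *)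

From mathcomp Require Import all_boot all_algebra all_classical all_reals.
From mathcomp Require Import complex ereal.
Set Implicit Arguments. Unset Strict Implicit. Unset Printing Implicit Defensive.
Import GRing.Theory Num.Theory.
Local Open Scope ring_scope.
Local Open Scope classical_set_scope.

Section HilbertDefs.
Variable R : realType.
Local Notation C := R[i].
Variable V : lmodType C.
Variable ip : V -> V -> C.   (* inner product, linear in the first argument *)

Definition hnorm (x : V) : R := Num.sqrt (complex.Re (ip x x)).

Record is_inner_product : Prop := {
  ip_linl : forall (a : C) (x y z : V), ip (a *: x + y) z = a * ip x z + ip y z;
  ip_conj : forall x y : V, ip y x = conjc (ip x y);
  ip_pos  : forall x : V, 0 <= ip x x;
  ip_def  : forall x : V, ip x x = 0 -> x = 0 }.

Definition ip_complete : Prop :=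
  forall u : nat -> V,
    (forall e : R, 0 < e -> exists N : nat, forall m n : nat,
        (N <= m)%N -> (N <= n)%N -> hnorm (u m - u n) < e) ->
    exists l : V, forall e : R, 0 < e -> exists N : nat, forall n : nat,
        (N <= n)%N -> hnorm (u n - l) < e.

Definition is_hilbert : Prop := is_inner_product /\ ip_complete.

Definition bounded_op (T : V -> V) : Prop :=
  (forall (a : C) (x y : V), T (a *: x + y) = a *: T x + T y) /\
  exists M : R, forall x : V, hnorm (T x) <= M * hnorm x.

Definition is_adjoint (T Ts : V -> V) : Prop :=
  bounded_op Ts /\ forall x y : V, ip (T x) y = ip x (Ts y).

Definition positive_op (A : V -> V) : Prop :=
  bounded_op A /\ forall x : V, 0 <= ip (A x) x.

Definition range_op (A : V -> V) : set V := [set y | exists x, y = A x].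
Definition in_closure_range (A : V -> V) (y : V) : Prop :=
  forall e : R, 0 < e -> exists x : V, hnorm (y - A x) < e.

Definition dim_range_ge2 (A : V -> V) : Prop :=
  exists x1 x2 : V, range_op A x1 /\ range_op A x2 /\
    forall a b : C, a *: x1 + b *: x2 = 0 -> a = 0 /\ b = 0.

Definition ipA (A : V -> V) (x y : V) : C := ip (A x) y.
Definition normA (A : V -> V) (x : V) : R := Num.sqrt (complex.Re (ipA A x x)).

Definition opnormA (A S : V -> V) : \bar R :=
  ereal_sup [set ((normA A (S x) / normA A x)%:E)%E
            | x in [set x | in_closure_range A x /\ x <> 0]].

Definition is_A_adjoint (A T W : V -> V) : Prop :=
  forall x y : V, ipA A (T x) y = ipA A x (W y).

Definition in_BA (A T : V -> V) : Prop :=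
  bounded_op T /\ exists W, bounded_op W /\ is_A_adjoint A T W.

(* X = T^{#_A}: the (unique) solution X in B(H) of A X = T^* A with
   R(X) contained in the closure of R(A) *)
Definition is_A_sharp (A T X : V -> V) : Prop :=
  bounded_op X /\
  (exists Tstar, is_adjoint T Tstar /\ forall x : V, A (X x) = Tstar (A x)) /\
  (forall x : V, in_closure_range A (X x)).

Definition wqA (A : V -> V) (q : C) (T : V -> V) : \bar R :=
  ereal_sup [set ((Normc.normc (ipA A (T p.1) p.2))%:E)%E
            | p in [set p : V * V | normA A p.1 = 1 /\ normA A p.2 = 1 /\
                                    ipA A p.1 p.2 = q]].

End HilbertDefs.

(* Write <.,.> and |.| for the A-semi-inner product and seminorm, and call
   (x, y) admissible when |x| = |y| = 1 and <x, y> = q.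

   If |<Tx, y>| <= w on admissible pairs, take a unit x and a
   unit z A-orthogonal to x (this is where dim R(A) >= 2 is used): both
   y = q^* x +- sqrt(1 - |q|^2) z are admissible, and the parallelogram law
   gives |q| |<Tx, x>| <= w.  The A-self-adjoint operators H = T + T# and
   K = i (T# - T) then have |Re <Hv, v>|, |Re <Kv, v>| <= (2w/|q|) |v|^2, hence
   A-norms at most 2w/|q|, and 2 <(T#T + TT#) x, y> = <Hx, Hy> + <Kx, Ky>
   bounds |T#T + TT#|_A by 4 w^2 / |q|^2.

   For admissible (x, y), replace x by the vector of the closure
   of R(A) with the same image under A (Hilbert projection theorem).  Writing
   y = q^* x + v with |v|^2 = 1 - |q|^2,
   |<Tx, y>| <= |q| min(|Tx|, |T#x|) + sqrt(1 - |q|^2) |Tx|, while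
   |Tx|^2 + |T#x|^2 = <(TT# + T#T) x, x>; an AM-GM estimate concludes. *)

From mathcomp Require Import all_boot all_algebra all_classical all_reals.
From mathcomp Require Import complex ereal order ring lra.
Import Order.TTheory GRing.Theory Num.Theory.
Local Open Scope ring_scope.
Set Implicit Arguments. Unset Strict Implicit. Unset Printing Implicit Defensive.

Section RealFacts.
Variable R : realType.

Lemma sqrtr_le (x a : R) : 0 <= a -> (Num.sqrt x <= a) = (x <= a ^+ 2).
Proof. by move=> a0; rewrite -(ler_sqrt x) ?sqr_ge0 // sqrtr_sqr ger0_norm. Qed.

Lemma sqrtr_lt (x a : R) : 0 < a -> (Num.sqrt x < a) = (x < a ^+ 2).
Proof. by move=> a0; rewrite -(ltr_sqrt x) ?exprn_gt0 // sqrtr_sqr gtr0_norm. Qed.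

Lemma sqr_le_sqrtr (a b : R) : 0 <= a -> 0 <= b -> (a ^+ 2 <= b) = (a <= Num.sqrt b).
Proof. by move=> a0 b0; rewrite -(ler_sqrt (a ^+ 2)) // sqrtr_sqr ger0_norm. Qed.

Lemma quadratic_ge0_discr (a b N : R) : 0 <= b -> 0 < N ->
  (forall l, 0 <= a + 2 * l * N + l ^+ 2 * N * b) -> N <= a * b.
Proof.
move=> b0 N0 h; have [b_eq0|bN0] := eqVneq b 0.
  have := h (- (a + 1) / (2 * N)); rewrite b_eq0 mulr0 addr0.
  have -> : 2 * (- (a + 1) / (2 * N)) * N = - (a + 1) by field; rewrite lt0r_neq0.
  lra.
have := h (- b^-1) => /(mulr_ge0 b0).
have -> : b * (a + 2 * - b^-1 * N + (- b^-1) ^+ 2 * N * b) = a * b - N by field.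
by rewrite subr_ge0.
Qed.

Lemma exists_inv_succ_lt (e : R) : 0 < e ->
  exists N : nat, forall n, (N <= n)%N -> (n.+1%:R)^-1 < e.
Proof.
move=> e0; exists (Num.Def.archi_bound e^-1) => n hn.
rewrite invf_plt ?posrE ?ltr0Sn //.
apply: lt_le_trans (archi_boundP _) _; first by rewrite invr_ge0 ltW.
by rewrite ler_nat; exact: leqW.
Qed.

Lemma le_of_sqr_le_mul (a b : R) : 0 <= b -> a ^+ 2 <= b * a -> a <= b.
Proof.
move=> b0; have [a_le0|a_gt0] := lerP a 0; first by move=> _; exact: le_trans a_le0 b0.
by rewrite expr2 ler_pM2r.
Qed.

(* The three terms of the square are at most [k^2 / 2], [2 k s] and
   [s^2 = 1 - k^2] times [a^2 + b^2]. *)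
Lemma numrad_upper_estimate (k s a b m1 m2 : R) :
  0 <= k -> 0 <= s -> s ^+ 2 = 1 - k ^+ 2 ->
  0 <= m1 -> m1 <= a -> m1 <= b -> 0 <= m2 -> m2 <= a * s ->
  (k * m1 + m2) ^+ 2 <= (2 - k ^+ 2 + 4 * k * s) / 2 * (a ^+ 2 + b ^+ 2).
Proof.
move=> k0 s0 s2 m10 m1a m1b m20 m2a.
have [a0 b0] : 0 <= a /\ 0 <= b.
  by split; [exact: le_trans m10 m1a | exact: le_trans m10 m1b].
have amgm : a * b <= (a ^+ 2 + b ^+ 2) / 2 by have := sqr_ge0 (a - b); nra.
have f1 : k ^+ 2 * (m1 * m1) <= k ^+ 2 * ((a ^+ 2 + b ^+ 2) / 2).
  by rewrite ler_wpM2l ?sqr_ge0 // (le_trans _ amgm) // ler_pM.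
have f2 : k * (m1 * m2) <= k * (s * (a ^+ 2 + b ^+ 2)).
  rewrite ler_wpM2l // (le_trans (ler_pM m10 m20 m1a m2a)) //.
  by have := sqr_ge0 b; have := mulr_ge0 s0 (sqr_ge0 b); nra.
have f3 : m2 * m2 <= (1 - k ^+ 2) * (a ^+ 2 + b ^+ 2).
  rewrite -s2 (le_trans (ler_pM m20 m20 m2a m2a)) //.
  by have := mulr_ge0 (sqr_ge0 s) (sqr_ge0 b); nra.
nra.
Qed.

End RealFacts.

Section ComplexFacts.
Variable R : realType.
Implicit Types z w : R[i].

Definition sqmod z : R := complex.Re z ^+ 2 + complex.Im z ^+ 2.

Lemma sqmod0 : sqmod (0 : R[i]) = 0.
Proof. by rewrite /sqmod /= expr0n addr0. Qed.

Lemma sqmod_ge0 z : 0 <= sqmod z.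
Proof. by rewrite addr_ge0 ?sqr_ge0. Qed.

Lemma sqmod_eq0 z : sqmod z = 0 -> z = 0.
Proof.
case: z => a b; rewrite /sqmod /= => h.
by have [-> ->] : a = 0 /\ b = 0 by split; apply/eqP; rewrite -sqrf_eq0; apply/eqP; nra.
Qed.

Lemma sqmodM z w : sqmod (z * w) = sqmod z * sqmod w.
Proof. by case: z => a b; case: w => c d; rewrite /sqmod /=; ring. Qed.

Lemma sqmod_real (r : R) : sqmod r%:C%C = r ^+ 2.
Proof. by rewrite /sqmod /=; ring. Qed.

Lemma sqmod_conj z : sqmod (conjc z) = sqmod z.
Proof. by case: z => a b; rewrite /sqmod /=; ring. Qed.

Lemma normc_sqmod z : Normc.normc z = Num.sqrt (sqmod z).
Proof. by case: z. Qed.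

Lemma sqmod_normc z : sqmod z = Normc.normc z ^+ 2.
Proof. by rewrite normc_sqmod sqr_sqrtr ?sqmod_ge0. Qed.

Lemma normc_ge0 z : 0 <= Normc.normc z.
Proof. by rewrite normc_sqmod sqrtr_ge0. Qed.

Lemma Re_sqr_le z : complex.Re z ^+ 2 <= sqmod z.
Proof. by rewrite lerDl sqr_ge0. Qed.

Lemma Im_sqr_le z : complex.Im z ^+ 2 <= sqmod z.
Proof. by rewrite lerDr sqr_ge0. Qed.

Lemma ge0_complex_real z : 0 <= z -> z = (complex.Re z)%:C%C.
Proof. by case: z => a b; rewrite lecE /= => /andP[/eqP -> _]. Qed.

Lemma conjc_i : conjc 'i%C = - 'i%C :> R[i].
Proof. by apply/eqP; rewrite eq_complex /= oppr0 !eqxx. Qed.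

Lemma sqmod_parallelogram z w :
  sqmod (z + w) + sqmod (z - w) = 2 * sqmod z + 2 * sqmod w.
Proof. by case: z => a b; case: w => c d; rewrite /sqmod /=; ring. Qed.

End ComplexFacts.

Section LinearOperator.
Variables (R : realType) (V : lmodType R[i]) (f : V -> V).
Hypothesis f_lin : forall a x y, f (a *: x + y) = a *: f x + f y.

Lemma linop0 : f 0 = 0.
Proof.
have := f_lin 1 0 0; rewrite scaler0 addr0 scale1r => f00.
by apply: (addrI (f 0)); rewrite addr0 -f00.
Qed.

Lemma linopD x y : f (x + y) = f x + f y.
Proof. by rewrite -{1}[x]scale1r f_lin scale1r. Qed.

Lemma linopZ a x : f (a *: x) = a *: f x.
Proof. by rewrite -[a *: x]addr0 f_lin linop0 addr0. Qed.

Lemma linopN x : f (- x) = - f x.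
Proof. by rewrite -scaleN1r linopZ scaleN1r. Qed.

Lemma linopB x y : f (x - y) = f x - f y.
Proof. by rewrite linopD linopN. Qed.

End LinearOperator.

Record semi_inner_product (R : realType) (V : lmodType R[i]) (P : V -> V -> R[i])
  : Prop := SemiInnerProduct {
  sip_linl : forall a x y z, P (a *: x + y) z = a * P x z + P y z;
  sip_conj : forall x y, P y x = conjc (P x y);
  sip_ge0 : forall x, 0 <= P x x }.

Section SemiInnerProduct.
Variables (R : realType) (V : lmodType R[i]) (P : V -> V -> R[i]).
Hypothesis HP : semi_inner_product P.
Implicit Types (x y z u v w : V) (t : R[i]).

Lemma sip0l z : P 0 z = 0.
Proof.
have := sip_linl HP 1 0 0 z; rewrite scaler0 addr0 mul1r => P00.
by apply: (addrI (P 0 z)); rewrite addr0 -P00.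
Qed.

Lemma sipDl x y z : P (x + y) z = P x z + P y z.
Proof. by rewrite -{1}[x]scale1r (sip_linl HP) mul1r. Qed.

Lemma sipZl t x z : P (t *: x) z = t * P x z.
Proof. by rewrite -[t *: x]addr0 (sip_linl HP) sip0l addr0. Qed.

Lemma sipNl x z : P (- x) z = - P x z.
Proof. by rewrite -scaleN1r sipZl mulN1r. Qed.

Lemma sipBl x y z : P (x - y) z = P x z - P y z.
Proof. by rewrite sipDl sipNl. Qed.

Lemma sipDr x y z : P x (y + z) = P x y + P x z.
Proof. by rewrite (sip_conj HP) sipDl rmorphD /= -!(sip_conj HP). Qed.

Lemma sipZr t x y : P x (t *: y) = conjc t * P x y.
Proof. by rewrite (sip_conj HP) sipZl rmorphM /= -(sip_conj HP). Qed.

Lemma sipNr x y : P x (- y) = - P x y.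
Proof. by rewrite (sip_conj HP) sipNl rmorphN /= -(sip_conj HP). Qed.

Lemma sipBr x y z : P x (y - z) = P x y - P x z.
Proof. by rewrite sipDr sipNr. Qed.

Lemma sip0r x : P x 0 = 0.
Proof. by rewrite (sip_conj HP) sip0l rmorph0. Qed.

Definition sqnorm x : R := complex.Re (P x x).

Lemma sqnorm_ge0 x : 0 <= sqnorm x.
Proof. by have := sip_ge0 HP x; rewrite /sqnorm lecE => /andP[]. Qed.

Lemma sip_diag x : P x x = (sqnorm x)%:C%C.
Proof. exact/ge0_complex_real/(sip_ge0 HP). Qed.

Lemma sqnorm_lin x y t : sqnorm (x + t *: y) = sqnorm x
  + 2 * (complex.Re t * complex.Re (P x y) + complex.Im t * complex.Im (P x y))
  + sqmod t * sqnorm y.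
Proof.
rewrite /sqnorm !sipDl !sipDr !sipZl !sipZr [P y x](sip_conj HP) !sip_diag /sqmod.
by case: t => a b; case: (P x y) => c d /=; ring.
Qed.

Lemma sqnorm0 : sqnorm 0 = 0.
Proof. by rewrite /sqnorm sip0l. Qed.

Lemma sqnormZ t x : sqnorm (t *: x) = sqmod t * sqnorm x.
Proof. by have := sqnorm_lin 0 x t; rewrite add0r sqnorm0 sip0l /= => ->; ring. Qed.

Lemma sqnormN x : sqnorm (- x) = sqnorm x.
Proof. by rewrite -scaleN1r sqnormZ /sqmod /=; ring. Qed.

Lemma sqnormD x y : sqnorm (x + y) = sqnorm x + sqnorm y + 2 * complex.Re (P x y).
Proof. by have := sqnorm_lin x y 1; rewrite scale1r => ->; rewrite /sqmod /=; ring. Qed.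

Lemma sqnormB x y : sqnorm (x - y) = sqnorm x + sqnorm y - 2 * complex.Re (P x y).
Proof. by rewrite sqnormD sqnormN sipNr raddfN /=; ring. Qed.

Lemma sqnorm_parallelogram x y :
  sqnorm (x + y) + sqnorm (x - y) = 2 * sqnorm x + 2 * sqnorm y.
Proof. by rewrite sqnormD sqnormB; ring. Qed.

Lemma sqnorm_apollonius x a b : sqnorm (a - b) =
  2 * sqnorm (x - a) + 2 * sqnorm (x - b) - 4 * sqnorm (x - 2^-1 *: (a + b)).
Proof.
have := sqnorm_parallelogram (x - a) (x - b).
have -> : x - a - (x - b) = - (a - b) by rewrite !opprD !opprK addrACA subrr add0r.
have -> : x - a + (x - b) = 2 *: (x - 2^-1 *: (a + b)).
  rewrite scalerBr scalerA mulfV ?pnatr_eq0 // scale1r.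
  by rewrite scaler_nat mulr2n addrACA opprD.
have sqmod2 : sqmod (2 : R[i]) = 4 by rewrite /sqmod /=; ring.
rewrite sqnormN sqnormZ sqmod2; lra.
Qed.

Lemma sqnorm_line x y (l : R) : sqnorm (x + (l%:C%C * P x y) *: y) =
  sqnorm x + 2 * l * sqmod (P x y) + l ^+ 2 * sqmod (P x y) * sqnorm y.
Proof. by rewrite sqnorm_lin sqmodM sqmod_real /sqmod; case: (P x y) => c d /=; ring. Qed.

Lemma sip_CauchySchwarz x y : sqmod (P x y) <= sqnorm x * sqnorm y.
Proof.
have [->|/negPf p0] := eqVneq (sqmod (P x y)) 0.
  by rewrite mulr_ge0 ?sqnorm_ge0.
apply: quadratic_ge0_discr; first exact: sqnorm_ge0.
  by rewrite lt_def p0 sqmod_ge0.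
by move=> l; rewrite -sqnorm_line sqnorm_ge0.
Qed.

Lemma Re_sip_le x y :
  complex.Re (P x y) <= Num.sqrt (sqnorm x) * Num.sqrt (sqnorm y).
Proof.
rewrite -sqrtrM ?sqnorm_ge0 //; apply: le_trans (ler_norm _) _.
by rewrite -sqrtr_sqr ler_wsqrtr // (le_trans (Re_sqr_le _)) ?sip_CauchySchwarz.
Qed.

Lemma normc_sip_le x y :
  Normc.normc (P x y) <= Num.sqrt (sqnorm x) * Num.sqrt (sqnorm y).
Proof. by rewrite normc_sqmod -sqrtrM ?sqnorm_ge0 // ler_wsqrtr // sip_CauchySchwarz. Qed.

Lemma sqrt_sqnormD_le x y :
  Num.sqrt (sqnorm (x + y)) <= Num.sqrt (sqnorm x) + Num.sqrt (sqnorm y).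
Proof.
rewrite sqrtr_le ?addr_ge0 ?sqrtr_ge0 // sqnormD sqrrD !sqr_sqrtr ?sqnorm_ge0 //.
by have := Re_sip_le x y; lra.
Qed.

Lemma sip_sqnorm0 x y : sqnorm x = 0 -> P x y = 0.
Proof.
move=> x0; apply: sqmod_eq0; apply/eqP; rewrite eq_le sqmod_ge0 andbT.
by have := sip_CauchySchwarz x y; rewrite x0 mul0r.
Qed.

Lemma sip_eq0_of_min g w :
  (forall t, sqnorm g <= sqnorm (g + t *: w)) -> P g w = 0.
Proof.
move=> gmin; apply: sqmod_eq0; apply/eqP; rewrite eq_le sqmod_ge0 andbT.
rewrite leNgt; apply/negP => p0.
suff : sqmod (P g w) <= 0 by rewrite leNgt p0.
rewrite -(mul0r (sqnorm w)); apply: quadratic_ge0_discr (sqnorm_ge0 w) p0 _ => l.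
by have := gmin (l%:C%C * P g w); rewrite sqnorm_line; lra.
Qed.

Lemma exists_unit_scale w : 0 < sqnorm w -> exists k, sqnorm (k *: w) = 1.
Proof.
move=> w0; exists ((Num.sqrt (sqnorm w))^-1)%:C%C.
by rewrite sqnormZ sqmod_real exprVn sqr_sqrtr ?mulVf ?lt0r_neq0 // ltW.
Qed.

(* Polarization with [v = t Hu] gives
   [4 t |Hu|^2 = Re <H(u+v), u+v> - Re <H(u-v), u-v> <= 2 W (|u|^2 + t^2 |Hu|^2)]
   for every real [t]; the discriminant of this quadratic concludes. *)
Lemma selfadjoint_sqnorm_le (H : V -> V) (W : R) : 0 <= W ->
  (forall a x y, H (a *: x + y) = a *: H x + H y) ->
  (forall u v, P (H u) v = P u (H v)) ->
  (forall v, `|complex.Re (P (H v) v)| <= W * sqnorm v) ->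
  forall u, sqnorm (H u) <= W ^+ 2 * sqnorm u.
Proof.
move=> W0 Hlin Hsa Hb u.
have key (t : R) : 2 * t * sqnorm (H u) <= W * (sqnorm u + t ^+ 2 * sqnorm (H u)).
  set v := t%:C%C *: H u.
  have polar : P (H (u + v)) (u + v) - P (H (u - v)) (u - v)
      = (4 * (t * sqnorm (H u)))%:C%C.
    rewrite (linopD Hlin) (linopB Hlin) sipDl sipBl !sipDr !sipNr [P (H v) u]Hsa.
    by rewrite /v sipZl sipZr sip_diag conjc_real !rmorphM rmorph_nat /=; ring.
  move/(congr1 (@complex.Re R)): polar; rewrite raddfB /= => polar.
  have Qv : sqnorm v = t ^+ 2 * sqnorm (H u) by rewrite /v sqnormZ sqmod_real.
  have := sqnorm_parallelogram u v.
  move: (Hb (u + v)) (Hb (u - v)) => /ler_normlP[_ b1] /ler_normlP[b2 _].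
  nra.
have [->|/negPf Hu0] := eqVneq (sqnorm (H u)) 0.
  by rewrite mulr_ge0 ?sqr_ge0 ?sqnorm_ge0.
rewrite expr2 -mulrA mulrC; apply: quadratic_ge0_discr => //.
  by rewrite lt_def Hu0 sqnorm_ge0.
move=> l; have := key (- l); lra.
Qed.

End SemiInnerProduct.

Lemma inner_product_semi (R : realType) (V : lmodType R[i]) (ip : V -> V -> R[i]) :
  is_inner_product ip -> semi_inner_product ip.
Proof. by case=> *; split. Qed.

Section ProjectionOntoClosureRange.
Variables (R : realType) (V : lmodType R[i]) (ip : V -> V -> R[i]).
Hypothesis HH : is_hilbert ip.
Variable A : V -> V.
Hypothesis A_lin : forall a x y, A (a *: x + y) = a *: A x + A y.
Variable x : V.

Let ip_sip := inner_product_semi HH.1.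
Local Notation nrm v := (Num.sqrt (sqnorm ip v)).

Lemma closure_rangeB u z : in_closure_range ip A u -> in_closure_range ip A (u - A z).
Proof.
move=> cu e e0; have [w hw] := cu e e0; exists (w - z).
by rewrite (linopB A_lin) opprB addrA subrK.
Qed.

Let dist := inf [set nrm (x - A z) | z in [set: V]]%classic.

Let dist_lb z : dist <= nrm (x - A z).
Proof. by apply: ge_inf; [exists 0 => _ [? _ <-]; exact: sqrtr_ge0 | exists z]. Qed.

Let dist_ge0 : 0 <= dist.
Proof.
by apply: lb_le_inf => [|_ [z _ <-]]; [exists (nrm (x - A 0)), 0 | exact: sqrtr_ge0].
Qed.

Let dist_le_closure u : in_closure_range ip A u -> dist <= nrm (x - u).
Proof.
move=> cu; apply/ler_addgt0Pr => e e0; have [z hz] := cu e e0.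
apply: le_trans (dist_lb z) _.
have -> : x - A z = (x - u) + (u - A z) by rewrite addrA subrK.
by apply: le_trans (sqrt_sqnormD_le ip_sip _ _) _; rewrite lerD2l; exact: ltW.
Qed.

Let eps (n : nat) : R := (n.+1%:R)^-1.

Let exists_minimizing : exists zf : nat -> V,
  forall n, sqnorm ip (x - A (zf n)) < dist ^+ 2 + eps n.
Proof.
suff /choice[zf hz] : forall n, exists z,
  sqnorm ip (x - A z) < dist ^+ 2 + eps n by exists zf.
move=> n.
have en0 : 0 < eps n by rewrite invr_gt0 ltr0Sn.
have d2en0 : 0 < dist ^+ 2 + eps n by rewrite ltr_wpDl ?sqr_ge0.
have : dist < Num.sqrt (dist ^+ 2 + eps n).
  by rewrite -{1}(ger0_norm dist_ge0) -sqrtr_sqr ltr_sqrt // ltrDl.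
case/inf_lt => [|_ [z _ <-] hz]; first by exists (nrm (x - A 0)), 0.
by exists z; rewrite -ltr_sqrt.
Qed.

Let minimizing_cauchy (zf : nat -> V) :
  (forall n, sqnorm ip (x - A (zf n)) < dist ^+ 2 + eps n) ->
  forall e : R, 0 < e -> exists N : nat, forall m n, (N <= m)%N -> (N <= n)%N ->
    hnorm ip (A (zf m) - A (zf n)) < e.
Proof.
move=> hz e e0.
have [N hN] : exists N : nat, forall n, (N <= n)%N -> eps n < e ^+ 2 / 4.
  by apply: exists_inv_succ_lt; rewrite divr_gt0 ?exprn_gt0.
exists N => m n hm hn; rewrite /hnorm -/(sqnorm ip _) sqrtr_lt //.
rewrite (sqnorm_apollonius ip_sip x) -(linopD A_lin) -(linopZ A_lin).
have mid := dist_lb (2^-1 *: (zf m + zf n)).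
rewrite -sqr_le_sqrtr ?sqnorm_ge0 // in mid.
by have := hz m; have := hz n; have := hN m hm; have := hN n hn; lra.
Qed.

Let minimizing_limit : exists l, in_closure_range ip A l /\ nrm (x - l) <= dist.
Proof.
have [zf hz] := exists_minimizing.
have [l hl] := HH.2 _ (minimizing_cauchy hz).
exists l; split.
  move=> e e0; have [N hN] := hl e e0; exists (zf N).
  by rewrite /hnorm -/(sqnorm ip _) -sqnormN ?opprB //; apply: hN.
apply/ler_addgt0Pr => e e0; have e20 : 0 < e / 2 by rewrite divr_gt0.
have [N1 hN1] := hl _ e20.
have [N2 hN2] : exists N : nat, forall n, (N <= n)%N -> eps n < (e / 2) ^+ 2.
  by apply: exists_inv_succ_lt; rewrite exprn_gt0.
have h1 : nrm (x - A (zf (maxn N1 N2))) < dist + e / 2.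
  rewrite sqrtr_lt ?ltr_wpDl //; have := hz (maxn N1 N2).
  have := hN2 _ (leq_maxr N1 N2); have := mulr_ge0 dist_ge0 (ltW e0); nra.
have h2 := hN1 _ (leq_maxl N1 N2); rewrite /hnorm -/(sqnorm ip _) in h2.
have -> : x - l = (x - A (zf (maxn N1 N2))) + (A (zf (maxn N1 N2)) - l).
  by rewrite addrA subrK.
by apply: le_trans (sqrt_sqnormD_le ip_sip _ _) _; lra.
Qed.

Lemma exists_closure_range_orth :
  exists l, in_closure_range ip A l /\ forall z, ip (x - l) (A z) = 0.
Proof.
have [l [cl hl]] := minimizing_limit.
exists l; split=> // z; apply: (sip_eq0_of_min ip_sip) => t.
have -> : x - l + t *: A z = x - (l - A (t *: z)).
  by rewrite (linopZ A_lin) opprD opprK addrA.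
rewrite -ler_sqrt ?sqnorm_ge0 //.
exact: le_trans hl (dist_le_closure (closure_rangeB _ cl)).
Qed.

End ProjectionOntoClosureRange.

Section PositiveOperator.
Variables (R : realType) (V : lmodType R[i]) (ip : V -> V -> R[i]).
Hypothesis HI : is_inner_product ip.
Variable A : V -> V.
Hypothesis HA : positive_op ip A.

Let ip_sip := inner_product_semi HI.
Let A_lin := HA.1.1.
Local Notation PA := (ipA ip A).
Local Notation QA := (sqnorm (ipA ip A)).

(* Polarization: on a complex space the sesquilinear form [<Au, v> - <u, Av>]
   vanishes on the diagonal, hence everywhere. *)
Lemma positive_op_selfadjoint x y : ip (A x) y = ip x (A y).
Proof.
pose f u v := ip (A u) v - ip u (A v).
have f_diag u : f u u = 0.
  by rewrite /f [ip u (A u)](sip_conj ip_sip) (ge0_complex_real (HA.2 u)) conjc_real subrr.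
have f_line u v c : f (u + c *: v) (u + c *: v) =
    f u u + conjc c * f u v + c * f v u + c * conjc c * f v v.
  rewrite /f (linopD A_lin) (linopZ A_lin) !(sipDl ip_sip) !(sipZl ip_sip).
  by rewrite !(sipDr ip_sip) !(sipZr ip_sip); ring.
have := f_line x y 1; have := f_line x y 'i%C.
rewrite !f_diag conjc1 conjc_i !mul1r !mulr0 !addr0 !add0r => hi h1.
have : 2 * 'i%C * f x y = 0.
  have -> : 2 * 'i%C * f x y = 'i%C * (f x y + f y x) - (- 'i%C * f x y + 'i%C * f y x).
    by ring.
  by rewrite -h1 -hi mulr0 subrr.
move/eqP; rewrite !mulf_eq0 pnatr_eq0 eq_complex /= oner_eq0 andbF /=.
by rewrite /f subr_eq0 => /eqP.
Qed.

Lemma ipA_semi_inner : semi_inner_product PA.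
Proof.
split=> [a x y z|x y|x]; rewrite /ipA.
- by rewrite A_lin (sipDl ip_sip) (sipZl ip_sip).
- by rewrite (sip_conj ip_sip) positive_op_selfadjoint.
- exact: HA.2.
Qed.

Lemma normAE x : normA ip A x = Num.sqrt (QA x).
Proof. by []. Qed.

Lemma opnormA_le (S : V -> V) (c : R) : 0 <= c ->
  (forall x, normA ip A (S x) <= c * normA ip A x) -> (opnormA ip A S <= c%:E)%E.
Proof.
move=> c0 hS; apply: ge_ereal_sup => _ [x _ <-]; rewrite lee_fin.
have [->|nx_ne0] := eqVneq (normA ip A x) 0; first by rewrite invr0 mulr0.
by rewrite ler_pdivrMr // lt_def nx_ne0 sqrtr_ge0.
Qed.

Lemma opnormA_ge (S : V -> V) x : in_closure_range ip A x -> normA ip A x = 1 ->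
  ((normA ip A (S x))%:E <= opnormA ip A S)%E.
Proof.
move=> cx nx1; apply: ereal_sup_ubound; exists x; last by rewrite nx1 divr1.
split=> // x0; move: nx1; rewrite x0 normAE (sqnorm0 ipA_semi_inner) sqrtr0.
by move/eqP; rewrite eq_sym oner_eq0.
Qed.

Lemma normA_eq1 x : normA ip A x = 1 <-> QA x = 1.
Proof.
rewrite normAE; split=> [nx1|->]; last exact: sqrtr1.
by rewrite -(sqr_sqrtr (sqnorm_ge0 ipA_semi_inner x)) nx1 expr1n.
Qed.

Lemma sqnormA_range_gt0 a : A a <> 0 -> 0 < QA (A a).
Proof.
move=> Aa0; rewrite lt_def (sqnorm_ge0 ipA_semi_inner) andbT; apply/eqP => QAa0.
have AAa0 : A (A a) = 0.
  by apply: (ip_def HI); have := sip_sqnorm0 ipA_semi_inner (A (A a)) QAa0.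
by apply: Aa0; apply: (ip_def HI); rewrite positive_op_selfadjoint AAa0 (sip0r ip_sip).
Qed.

(* With [c1 = <x, A a2>^*] and [c2 = - <x, A a1>^*], the vector [c1 A a1 + c2 A a2]
   is A-orthogonal to [x], and nonzero unless [c1 = c2 = 0], when [A a1] is. *)
Lemma exists_orth_unitA : dim_range_ge2 A ->
  forall x, exists z, PA x z = 0 /\ QA z = 1.
Proof.
case=> _ [_ [[a1 ->] [[a2 ->] indep]]] x.
have unit_of w : PA x (A w) = 0 -> A w <> 0 -> exists z, PA x z = 0 /\ QA z = 1.
  move=> xw /sqnormA_range_gt0 /(exists_unit_scale ipA_semi_inner) [k hk].
  by exists (k *: A w); rewrite (sipZr ipA_semi_inner) xw mulr0.
set c1 := conjc (PA x (A a2)); set c2 := - conjc (PA x (A a1)).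
have [/andP[/eqP c10 /eqP c20] | c_ne0] := boolP ((c1 == 0) && (c2 == 0)).
  apply: (unit_of a1).
    by move/eqP: c20; rewrite oppr_eq0 conjc_eq0 => /eqP.
  move=> Aa10; have [] := indep 1 0; last by move/eqP; rewrite oner_eq0.
  by rewrite Aa10 scaler0 scale0r addr0.
have comb : A (c1 *: a1 + c2 *: a2) = c1 *: A a1 + c2 *: A a2.
  by rewrite A_lin (linopZ A_lin).
apply: (unit_of (c1 *: a1 + c2 *: a2)).
  rewrite comb (sipDr ipA_semi_inner) !(sipZr ipA_semi_inner).
  by rewrite /c1 /c2 rmorphN /= !conjcK; ring.
by rewrite comb => /indep [h1 h2]; move: c_ne0; rewrite h1 h2 eqxx.
Qed.

Lemma closure_range_rep : is_hilbert ip ->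
  forall x, exists u, in_closure_range ip A u /\ A u = A x.
Proof.
move=> HH x; have [l [cl orth]] := exists_closure_range_orth HH A_lin x.
exists l; split=> //; apply/eqP; rewrite eq_sym -subr_eq0 -(linopB A_lin).
apply/eqP/(ip_def HI); rewrite positive_op_selfadjoint; exact: orth.
Qed.

Section Sharp.
Variables T Tsh : V -> V.
Hypothesis HT : in_BA ip A T.
Hypothesis HTsh : is_A_sharp ip A T Tsh.

Let T_lin := HT.1.1.
Let Tsh_lin := HTsh.1.1.

Lemma sharp_adjl x y : PA (Tsh x) y = PA x (T y).
Proof.
case: HTsh => _ [[Ts [[_ Ts_adj] ATsh]] _].
by rewrite /ipA ATsh (sip_conj ip_sip) -Ts_adj -(sip_conj ip_sip).
Qed.

Lemma sharp_adjr x y : PA (T x) y = PA x (Tsh y).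
Proof. by rewrite (sip_conj ipA_semi_inner) -sharp_adjl -(sip_conj ipA_semi_inner). Qed.

Lemma sipA_T_kerA n y : A n = 0 -> PA (T n) y = 0.
Proof. by case: HT => _ [W [_ HW]] An0; rewrite HW /ipA An0 (sip0l ip_sip). Qed.

(* [re2 + 'i *: im2 = 2 T]: the A-real and A-imaginary parts of [T], doubled. *)
Definition re2 v := T v + Tsh v.
Definition im2 v := 'i%C *: (Tsh v - T v).

Lemma re2_lin a x y : re2 (a *: x + y) = a *: re2 x + re2 y.
Proof. by rewrite /re2 T_lin Tsh_lin scalerDr addrACA. Qed.

Lemma im2_lin a x y : im2 (a *: x + y) = a *: im2 x + im2 y.
Proof.
by rewrite /im2 T_lin Tsh_lin opprD addrACA -scalerBr scalerDr scalerA mulrC -scalerA.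
Qed.

Lemma re2_selfadjoint u v : PA (re2 u) v = PA u (re2 v).
Proof.
rewrite /re2 (sipDl ipA_semi_inner) (sipDr ipA_semi_inner) sharp_adjl sharp_adjr.
exact: addrC.
Qed.

Lemma im2_selfadjoint u v : PA (im2 u) v = PA u (im2 v).
Proof.
rewrite /im2 (sipZl ipA_semi_inner) (sipZr ipA_semi_inner) conjc_i.
by rewrite (sipBl ipA_semi_inner) (sipBr ipA_semi_inner) sharp_adjl sharp_adjr; ring.
Qed.

Lemma Re_re2 v : complex.Re (PA (re2 v) v) = 2 * complex.Re (PA (T v) v).
Proof.
rewrite /re2 (sipDl ipA_semi_inner) sharp_adjl [PA v (T v)](sip_conj ipA_semi_inner).
by case: (PA (T v) v) => a b /=; ring.
Qed.

Lemma Re_im2 v : complex.Re (PA (im2 v) v) = 2 * complex.Im (PA (T v) v).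
Proof.
rewrite /im2 (sipZl ipA_semi_inner) (sipBl ipA_semi_inner) sharp_adjl.
rewrite [PA v (T v)](sip_conj ipA_semi_inner).
by case: (PA (T v) v) => a b /=; ring.
Qed.

Lemma sharp_sum_sip x y : 2 * PA (Tsh (T x) + T (Tsh x)) y =
  PA (re2 x) (re2 y) + PA (im2 x) (im2 y).
Proof.
rewrite /im2 (sipZl ipA_semi_inner) (sipZr ipA_semi_inner) mulrA conjc_i.
rewrite mulrN -expr2 sqr_i opprK mul1r /re2 (sipDl ipA_semi_inner).
rewrite [PA (Tsh (T x)) y]sharp_adjl [PA (T (Tsh x)) y]sharp_adjr.
rewrite !(sipBl ipA_semi_inner) !(sipBr ipA_semi_inner).
by rewrite !(sipDl ipA_semi_inner) !(sipDr ipA_semi_inner); ring.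
Qed.

End Sharp.
End PositiveOperator.

Section NumericalRadius.
Variables (R : realType) (V : lmodType R[i]) (ip : V -> V -> R[i]).
Hypothesis HH : is_hilbert ip.
Variable A : V -> V.
Hypothesis HA : positive_op ip A.
Hypothesis Hdim : dim_range_ge2 A.
Variables T Tsh : V -> V.
Hypothesis HT : in_BA ip A T.
Hypothesis HTsh : is_A_sharp ip A T Tsh.
Variable q : R[i].
Hypothesis q_gt0 : 0 < Normc.normc q.
Hypothesis q_le1 : Normc.normc q <= 1.

Let HI := HH.1.
Let sipA := ipA_semi_inner HI HA.
Let A_lin := HA.1.1.
Let T_lin := HT.1.1.
Local Notation PA := (ipA ip A).
Local Notation QA := (sqnorm (ipA ip A)).
Local Notation k := (Normc.normc q).

Let sqmod_q : sqmod q = k ^+ 2.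
Proof. exact: sqmod_normc. Qed.

Local Notation s := (Num.sqrt (1 - k ^+ 2)).

Let k_sqr_le1 : k ^+ 2 <= 1.
Proof. by rewrite -(expr1n _ 2) ler_pXn2r ?nnegrE ?normc_ge0. Qed.

Let s_sqr : s ^+ 2 = 1 - k ^+ 2.
Proof. by rewrite sqr_sqrtr // subr_ge0. Qed.

Lemma admissible_pair x z (e : R) : QA x = 1 -> PA x z = 0 -> QA z = 1 -> e ^+ 2 = 1 ->
  QA (conjc q *: x + (e * s)%:C%C *: z) = 1 /\ PA x (conjc q *: x + (e * s)%:C%C *: z) = q.
Proof.
move=> x1 xz z1 e1; split.
  rewrite (sqnorm_lin sipA) (sipZl sipA) xz mulr0 (sqnormZ sipA) x1 z1.
  by rewrite sqmod_conj sqmod_real sqmod_q /= !mulr0 addr0 exprMn e1 s_sqr; ring.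
by rewrite (sipDr sipA) !(sipZr sipA) xz conjcK (sip_diag sipA) x1 mulr0 addr0 mulr1.
Qed.

Lemma exists_admissible : exists x y, QA x = 1 /\ QA y = 1 /\ PA x y = q.
Proof.
have [x [_ x1]] := exists_orth_unitA HI HA Hdim 0.
have [z [xz z1]] := exists_orth_unitA HI HA Hdim x.
have [y1 xy] := admissible_pair x1 xz z1 (expr1n _ 2).
by exists x, (conjc q *: x + (1 * s)%:C%C *: z).
Qed.

Section LowerBound.
Variable w : R.
Hypothesis w_ub : forall x y, QA x = 1 -> QA y = 1 -> PA x y = q ->
  Normc.normc (PA (T x) y) <= w.

Let w_ge0 : 0 <= w.
Proof.
have [x [y [x1 [y1 xy]]]] := exists_admissible.
exact: le_trans (normc_ge0 _) (w_ub x1 y1 xy).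
Qed.

Let sqmod_ub x y : QA x = 1 -> QA y = 1 -> PA x y = q -> sqmod (PA (T x) y) <= w ^+ 2.
Proof. by move=> x1 y1 xy; rewrite -sqrtr_le // -normc_sqmod; exact: w_ub. Qed.

(* Both [y = q^* x + s z] and [y = q^* x - s z] are admissible, and
   [<Tx, y> = q <Tx, x> +- s <Tx, z>]: average with the parallelogram law. *)
Lemma numrad_unit_le x : QA x = 1 -> sqmod q * sqmod (PA (T x) x) <= w ^+ 2.
Proof.
move=> x1; have [z [xz z1]] := exists_orth_unitA HI HA Hdim x.
have Ty (e : R) : PA (T x) (conjc q *: x + (e * s)%:C%C *: z) =
    q * PA (T x) x + e%:C%C * (s%:C%C * PA (T x) z).
  by rewrite (sipDr sipA) !(sipZr sipA) conjcK conjc_real rmorphM mulrA.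
have [yp1 xyp] := admissible_pair x1 xz z1 (expr1n _ 2).
have [ym1 xym] := admissible_pair x1 xz z1 (etrans (sqrrN _) (expr1n _ 2)).
have := sqmod_ub x1 yp1 xyp; have := sqmod_ub x1 ym1 xym.
rewrite !Ty rmorphN rmorph1 mulN1r mul1r.
have := sqmod_parallelogram (q * PA (T x) x) (s%:C%C * PA (T x) z).
have := sqmod_ge0 (s%:C%C * PA (T x) z); rewrite -sqmodM; lra.
Qed.

Lemma numrad_le v : sqmod q * sqmod (PA (T v) v) <= w ^+ 2 * QA v ^+ 2.
Proof.
have [Qv0|Qv_ne0] := eqVneq (QA v) 0.
  rewrite [PA (T v) v](sip_conj sipA) sqmod_conj (sip_sqnorm0 sipA _ Qv0) sqmod0.
  by rewrite Qv0 mulr0 expr0n /= mulr0.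
set c := (Num.sqrt (QA v))^-1.
have c2 : c ^+ 2 * QA v = 1.
  by rewrite exprVn sqr_sqrtr ?mulVf ?(sqnorm_ge0 sipA).
have := numrad_unit_le (_ : QA (c%:C%C *: v) = 1).
rewrite (sqnormZ sipA) sqmod_real => /(_ c2).
rewrite (linopZ T_lin) (sipZl sipA) (sipZr sipA) conjc_real mulrA -rmorphM.
rewrite sqmodM sqmod_real => h.
have -> : sqmod q * sqmod (PA (T v) v) =
    sqmod q * ((c * c) ^+ 2 * sqmod (PA (T v) v)) * QA v ^+ 2.
  by rewrite -[LHS]mulr1 -(expr1n _ 2) -c2; ring.
by rewrite ler_wpM2r ?sqr_ge0.
Qed.

Local Notation W := (2 * w / k).

Let W_ge0 : 0 <= W.
Proof. exact: divr_ge0 (mulr_ge0 (ler0n _ 2) w_ge0) (normc_ge0 q). Qed.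

Let sqmod_sipT_le v : 4 * sqmod (PA (T v) v) <= (W * QA v) ^+ 2.
Proof.
rewrite -(ler_pM2r (exprn_gt0 2 q_gt0)).
have -> : (W * QA v) ^+ 2 * k ^+ 2 = 4 * (w ^+ 2 * QA v ^+ 2).
  by field; rewrite lt0r_neq0.
by have := numrad_le v; rewrite sqmod_q; lra.
Qed.

Lemma Re_re2_le v : `|complex.Re (PA (re2 T Tsh v) v)| <= W * QA v.
Proof.
rewrite (Re_re2 HI HA HTsh) -sqrtr_sqr sqrtr_le ?(mulr_ge0 W_ge0) ?(sqnorm_ge0 sipA) //.
by apply: le_trans (sqmod_sipT_le v); have := Re_sqr_le (PA (T v) v); nra.
Qed.

Lemma Re_im2_le v : `|complex.Re (PA (im2 T Tsh v) v)| <= W * QA v.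
Proof.
rewrite (Re_im2 HI HA HTsh) -sqrtr_sqr sqrtr_le ?(mulr_ge0 W_ge0) ?(sqnorm_ge0 sipA) //.
by apply: le_trans (sqmod_sipT_le v); have := Im_sqr_le (PA (T v) v); nra.
Qed.

Let sqrt_sqnormA_le (f : V -> V) : (forall u, QA (f u) <= W ^+ 2 * QA u) ->
  forall u, Num.sqrt (QA (f u)) <= W * Num.sqrt (QA u).
Proof.
move=> hf u; rewrite sqrtr_le ?(mulr_ge0 W_ge0 (sqrtr_ge0 _)) //.
by rewrite exprMn sqr_sqrtr ?(sqnorm_ge0 sipA).
Qed.

Lemma sqrt_sqnormA_sharp_sum_le x :
  Num.sqrt (QA (Tsh (T x) + T (Tsh x))) <= W ^+ 2 * Num.sqrt (QA x).
Proof.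
set y := Tsh (T x) + T (Tsh x).
have re2_le := sqrt_sqnormA_le (selfadjoint_sqnorm_le sipA W_ge0
  (re2_lin HT HTsh) (re2_selfadjoint HI HA HTsh) Re_re2_le).
have im2_le := sqrt_sqnormA_le (selfadjoint_sqnorm_le sipA W_ge0
  (im2_lin HT HTsh) (im2_selfadjoint HI HA HTsh) Re_im2_le).
have sum_le (f : V -> V) : (forall u, Num.sqrt (QA (f u)) <= W * Num.sqrt (QA u)) ->
    complex.Re (PA (f x) (f y)) <= W ^+ 2 * (Num.sqrt (QA x) * Num.sqrt (QA y)).
  move=> hf; apply: le_trans (Re_sip_le sipA _ _) _.
  rewrite expr2 mulrACA; apply: ler_pM; rewrite ?sqrtr_ge0 //.
apply: le_of_sqr_le_mul; first by rewrite mulr_ge0 ?sqr_ge0 ?sqrtr_ge0.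
move/(congr1 (@complex.Re R)): (sharp_sum_sip HI HA HTsh x y).
rewrite (sip_diag sipA) raddfD /= sqr_sqrtr ?(sqnorm_ge0 sipA) //.
by have := sum_le _ re2_le; have := sum_le _ im2_le; lra.
Qed.

End LowerBound.

Local Notation cq := ((2 - k ^+ 2 + 4 * k * s) / 2).

Let cq_gt0 : 0 < cq.
Proof.
have : 0 <= 4 * k * s by rewrite !mulr_ge0 ?normc_ge0 ?sqrtr_ge0.
by have := k_sqr_le1; lra.
Qed.

Lemma sqnormA_T_sharp_le u : QA u = 1 ->
  QA (T u) + QA (Tsh u) <= Num.sqrt (QA (T (Tsh u) + Tsh (T u))).
Proof.
move=> u1; have := Re_sip_le sipA (T (Tsh u) + Tsh (T u)) u.
rewrite u1 sqrtr1 mulr1 (sipDl sipA) raddfD.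
rewrite [PA (T (Tsh u)) u](sharp_adjr HI HA HTsh).
by rewrite [PA (Tsh (T u)) u](sharp_adjl HI HTsh) addrC.
Qed.

(* Write [y = q^* u + v] with [v] A-orthogonal to [u], so that [|v|_A = s]. *)
Lemma sqmod_admissible_le u y : QA u = 1 -> QA y = 1 -> PA u y = q ->
  sqmod (PA (T u) y) <= cq * Num.sqrt (QA (T (Tsh u) + Tsh (T u))).
Proof.
move=> u1 y1 uy; set v := y - conjc q *: u.
have Ty : PA (T u) y = q * PA (T u) u + PA (T u) v.
  by rewrite /v (sipBr sipA) (sipZr sipA) conjcK; ring.
have v_s : Num.sqrt (QA v) = s.
  rewrite /v -scaleNr (sqnorm_lin sipA) [PA y u](sip_conj sipA) uy y1 u1 -sqmod_q.
  by congr Num.sqrt; rewrite /sqmod; move: (q) => [a b] /=; ring.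
apply: le_trans (ler_wpM2l (ltW cq_gt0) (sqnormA_T_sharp_le u1)).
rewrite sqmod_normc Ty; apply: le_trans (_ : (k * Normc.normc (PA (T u) u)
    + Normc.normc (PA (T u) v)) ^+ 2 <= _).
  rewrite ler_pXn2r ?nnegrE ?addr_ge0 ?mulr_ge0 ?normc_ge0 //.
  by apply: le_trans (le_normcD _ _) _; rewrite Normc.normcM.
rewrite -[QA (T u)](sqr_sqrtr (sqnorm_ge0 sipA _)).
rewrite -[QA (Tsh u)](sqr_sqrtr (sqnorm_ge0 sipA _)).
apply: numrad_upper_estimate; rewrite ?normc_ge0 ?sqrtr_ge0 //.
- by have := normc_sip_le sipA (T u) u; rewrite u1 sqrtr1 mulr1.
- have := normc_sip_le sipA u (Tsh u).
  by rewrite (sharp_adjr HI HA HTsh) u1 sqrtr1 mul1r.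
- by rewrite -v_s; exact: normc_sip_le.
Qed.

Local Notation wq := (wqA ip A q T).

Lemma wqA_ub x y : QA x = 1 -> QA y = 1 -> PA x y = q ->
  ((Normc.normc (PA (T x) y))%:E <= wq)%E.
Proof.
move=> x1 y1 xy; apply: ereal_sup_ubound; exists (x, y) => //=.
by rewrite !(normA_eq1 HI HA).
Qed.

Lemma wqA_le (w : R) : (forall x y, QA x = 1 -> QA y = 1 -> PA x y = q ->
  Normc.normc (PA (T x) y) <= w) -> (wq <= w%:E)%E.
Proof.
move=> hw; apply: ge_ereal_sup => _ [[x y] /= [x1 [y1 xy]] <-].
by rewrite lee_fin; apply: hw => //; exact/(normA_eq1 HI HA).
Qed.

Lemma wqA_ge0 : (0 <= wq)%E.
Proof.
have [x [y [x1 [y1 xy]]]] := exists_admissible.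
by apply: le_trans (wqA_ub x1 y1 xy); rewrite lee_fin normc_ge0.
Qed.

Lemma opnormA_sharp_sum_le_wqA :
  ((k ^+ 2 / 4)%:E * opnormA ip A (fun x => (Tsh (T x) + T (Tsh x))%R) <= wq * wq)%E.
Proof.
have := wqA_ge0; case Ew : wq => [w| |] // w0; last by rewrite mulyy leey.
have w_ub x y : QA x = 1 -> QA y = 1 -> PA x y = q -> Normc.normc (PA (T x) y) <= w.
  by move=> x1 y1 xy; rewrite -lee_fin -Ew; exact: wqA_ub.
have k4_ge0 : (0 <= (k ^+ 2 / 4)%:E)%E by rewrite lee_fin divr_ge0 ?sqr_ge0.
have /(lee_wpmul2l k4_ge0) /le_trans -> // :=
  opnormA_le (sqr_ge0 _) (sqrt_sqnormA_sharp_sum_le w_ub).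
rewrite -!EFinM (_ : k ^+ 2 / 4 * (2 * w / k) ^+ 2 = w * w) //.
by field; rewrite lt0r_neq0.
Qed.

Lemma admissible_closure_rep x y : QA x = 1 -> PA x y = q ->
  exists u, [/\ in_closure_range ip A u, QA u = 1, PA u y = q & PA (T u) y = PA (T x) y].
Proof.
move=> x1 xy; have [u [cu Au]] := closure_range_rep HI HA HH x.
have PA_u z : PA u z = PA x z by rewrite /ipA Au.
exists u; split=> //.
- by rewrite /sqnorm PA_u (sip_conj sipA) PA_u -(sip_conj sipA); exact: x1.
- by rewrite PA_u.
- apply/eqP; rewrite -subr_eq0 -(sipBl sipA) -(linopB T_lin) (sipA_T_kerA HI HT) //.
  by rewrite (linopB A_lin) Au subrr.
Qed.

Lemma sqmod_admissible_le_opnormA x y : QA x = 1 -> QA y = 1 -> PA x y = q ->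
  ((sqmod (PA (T x) y))%:E
    <= cq%:E * opnormA ip A (fun x => (T (Tsh x) + Tsh (T x))%R))%E.
Proof.
move=> x1 y1 xy; have [u [cu u1 uy <-]] := admissible_closure_rep x1 xy.
have cq_ge0 : (0 <= cq%:E)%E by rewrite lee_fin ltW.
apply: le_trans (lee_wpmul2l cq_ge0 (opnormA_ge HI HA _ cu _)); last first.
  exact/(normA_eq1 HI HA).
by rewrite -EFinM lee_fin sqmod_admissible_le.
Qed.

Lemma wqA_le_opnormA_sharp_sum :
  (wq * wq <= cq%:E * opnormA ip A (fun x => (T (Tsh x) + Tsh (T x))%R))%E.
Proof.
have key := sqmod_admissible_le_opnormA.
have [x [y [x1 [y1 xy]]]] := exists_admissible.
case EB : (_ * _)%E key => [b| |] key; last first.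
- by have := key _ _ x1 y1 xy; rewrite leeNy_eq.
- by rewrite leey.
have b_ge0 : 0 <= b by rewrite -lee_fin (le_trans _ (key _ _ x1 y1 xy)) // lee_fin sqmod_ge0.
have : (wq <= (Num.sqrt b)%:E)%E.
  apply: wqA_le => x' y' x'1 y'1 x'y'.
  by rewrite normc_sqmod ler_wsqrtr // -lee_fin; exact: key.
move: wqA_ge0; case: wq => [v| |] //; rewrite !lee_fin => v_ge0 v_le.
by rewrite -(sqr_sqrtr b_ge0) expr2 ler_pM.
Qed.

End NumericalRadius.

Theorem mainTheorem1 (R : realType) (V : lmodType R[i]) (ip : V -> V -> R[i])
  (HH : is_hilbert ip) (A : V -> V) (HA : positive_op ip A)
  (Hdim : dim_range_ge2 A) (T : V -> V) (HT : in_BA ip A T)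
  (Tsh : V -> V) (HTsh : is_A_sharp ip A T Tsh)
  (q : R[i]) (Hq0 : 0 < Normc.normc q) (Hq1 : Normc.normc q <= 1) :
  let aq := Normc.normc q in
  (((aq ^+ 2 / 4)%R%:E * opnormA ip A (fun x => (Tsh (T x) + T (Tsh x))%R)
      <= wqA ip A q T * wqA ip A q T)%E) /\
  ((wqA ip A q T * wqA ip A q T
      <= ((2 - aq ^+ 2 + 4 * aq * Num.sqrt (1 - aq ^+ 2)) / 2)%R%:E
           * opnormA ip A (fun x => (T (Tsh x) + Tsh (T x))%R))%E).
Proof.
split.
- exact: (opnormA_sharp_sum_le_wqA HH HA Hdim HT HTsh Hq0 Hq1).
- exact: (wqA_le_opnormA_sharp_sum HH HA Hdim HT HTsh Hq1).
Qed.
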